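(* Let $0<\beta<1$. Suppose that for each $x\in\mathcal{X}$ the function $y\mapsto f(x,y)$ is convex on $\mathbb{R}^d$. Then the non-risk region $\mathcal{R}_{\mathcal{X}}(\beta)^c=\mathbb{R}^d\setminus\mathcal{R}_{\mathcal{X}}(\beta)$ is convex.
   Context: Let $Y$ be a random vector in $\mathbb{R}^d$, $\mathcal{X}\subseteq\mathbb{R}^k$ a set of decisions and $f:\mathcal{X}\times\mathbb{R}^d\to\mathbb{R}$ a loss function with $f(x,Y)$ measurable for all $x$. Write $F_x(z)=\mathbb{P}(f(x,Y)\le z)$ and $F_x^{-1}(\beta)=\inf\{z: F_x(z)\ge\beta\}$. The $\beta$-risk region of $x$ is $\mathcal{R}_x(\beta)=\{y\in\mathbb{R}^d: f(x,y)\ge F_x^{-1}(\beta)\}$ and $\mathcal{R}_{\mathcal{X}}(\beta)=\bigcup_{x\in\mathcal{X}}\mathcal{R}_x(\beta)$. *)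

From HB Require Import structures.
From mathcomp Require Import all_boot all_order all_algebra.
From mathcomp Require Import all_classical all_reals all_analysis.
Set Implicit Arguments. Unset Strict Implicit. Unset Printing Implicit Defensive.
Import Order.TTheory GRing.Theory Num.Theory.
Local Open Scope classical_set_scope.
Local Open Scope ring_scope.

Definition loss_cdf {R : realType} {dT : measure_display} {T : measurableType dT}
  (P : probability T R) {k d : nat} (Y : T -> 'rV[R]_d)
  (f : 'rV[R]_k -> 'rV[R]_d -> R) (x : 'rV[R]_k) (z : R) : \bar R :=
  P [set w | f x (Y w) <= z].

Definition loss_quantile {R : realType} {dT : measure_display} {T : measurableType dT}
  (P : probability T R) {k d : nat} (Y : T -> 'rV[R]_d)
  (f : 'rV[R]_k -> 'rV[R]_d -> R) (x : 'rV[R]_k) (beta : R) : R :=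
  inf [set z : R | (beta%:E <= loss_cdf P Y f x z)%E].

Definition risk_region {R : realType} {dT : measure_display} {T : measurableType dT}
  (P : probability T R) {k d : nat} (Y : T -> 'rV[R]_d)
  (f : 'rV[R]_k -> 'rV[R]_d -> R) (x : 'rV[R]_k) (beta : R) : set 'rV[R]_d :=
  [set y | loss_quantile P Y f x beta <= f x y].

Definition risk_region_set {R : realType} {dT : measure_display} {T : measurableType dT}
  (P : probability T R) {k d : nat} (Y : T -> 'rV[R]_d)
  (f : 'rV[R]_k -> 'rV[R]_d -> R) (X : set 'rV[R]_k) (beta : R) : set 'rV[R]_d :=
  \bigcup_(x in X) risk_region P Y f x beta.

(** The complement of each risk region [R_x(beta)] is the strict sublevel set
    [{y | f x y < F_x^{-1}(beta)}] of the convex function [f x], hence convex;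
    the non-risk region is the intersection of these sets over [x \in X]. *)

From HB Require Import structures.
From mathcomp Require Import all_boot all_order all_algebra.
From mathcomp Require Import all_classical all_reals all_analysis.
Import Order.TTheory GRing.Theory Num.Theory.
Local Open Scope classical_set_scope.
Local Open Scope ring_scope.
Local Open Scope convex_scope.

Lemma conv_lt {R : realDomainType} {a b q : R^o} (t : {i01 R}) :
  a < q -> b < q -> a <| t |> b < q.
Proof.
move=> aq bq; have [ab|/ltW ba] := leP a b.
  exact: le_lt_trans (conv_le t ab) bq.
by rewrite convC; exact: le_lt_trans (conv_le _ ba) aq.
Qed.

Lemma convex_set_lt_sublevel (R : realFieldType) (E : lmodType R)
    (g : convex_lmodType E -> R^o) (q : R) :
  convex_function setT g -> convex_set [set y | g y < q].
Proof.
move=> gcvx y z t; rewrite !inE /= => yq zq.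
exact: le_lt_trans (gcvx t y z (mem_set I) (mem_set I)) (conv_lt t yq zq).
Qed.

Lemma convex_set_bigcap (R : numDomainType) (E : lmodType R) (I : Type)
    (D : set I) (A : I -> set (convex_lmodType E)) :
  (forall i, D i -> convex_set (A i)) -> convex_set (\bigcap_(i in D) A i).
Proof.
move=> Acvx y z t /set_mem yA /set_mem zA; apply/mem_set => i Di.
by apply/set_mem/(Acvx i Di); apply/mem_set; [exact: yA | exact: zA].
Qed.

Lemma setC_risk_region_set (R : realType) (dT : measure_display)
    (T : measurableType dT) (P : probability T R) (k d : nat)
    (Y : T -> 'rV[R]_d) (f : 'rV[R]_k -> 'rV[R]_d -> R)
    (X : set 'rV[R]_k) (beta : R) :
  ~` risk_region_set P Y f X beta =
  \bigcap_(x in X) [set y | f x y < loss_quantile P Y f x beta].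
Proof.
rewrite /risk_region_set setC_bigcup; apply: eq_bigcapr => x _.
by apply/seteqP; split => y /=; rewrite ltNge => /negP.
Qed.

Theorem mainTheorem4 (R : realType) (dT : measure_display) (T : measurableType dT)
  (P : probability T R) (k d : nat) (Y : T -> 'rV[R]_d)
  (X : set 'rV[R]_k) (f : 'rV[R]_k -> 'rV[R]_d -> R) (beta : R) :
  (forall x : 'rV[R]_k, measurable_fun setT (fun w => f x (Y w))) ->
  0 < beta -> beta < 1 ->
  (forall x, X x -> convex_function (E := 'rV[R]_d) setT (f x)) ->
  convex_set (M := 'rV[R]_d) (~` risk_region_set P Y f X beta).
Proof.
move=> _ _ _ fcvx; rewrite setC_risk_region_set.
apply: convex_set_bigcap => x Xx.
exact: convex_set_lt_sublevel (fcvx x Xx).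
Qed.
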